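(* Let $\sigma$ and $\tau$ be compositions of a positive integer $m$ with the same number of parts. Then for every positive integer $n$, the map $\Gamma(\mathsf{hypo}_n,\sigma)\to\Gamma(\mathsf{hypo}_n,\tau)$, $T\mapsto\pi_\tau(\overline{T})$, is an isomorphism of unlabelled directed graphs.
   Context: A quasi-array of size $m$ is an array $Q$ with cells $(i,j)$, $1\le i\le m$, $1\le j\le m-i+1$, each containing a positive integer, with first row weakly increasing and $Q_{(i,j)}=Q_{(1,i+j-1)}+i-1$. A quasi-ribbon tableau of shape $\sigma=(\sigma_1,\dots,\sigma_r)$ is a filling with positive integers of the diagram having $\sigma_i$ cells in row $i$, the leftmost cell of row $i+1$ directly below the rightmost cell of row $i$, weakly increasing along rows and strictly increasing down columns; its column reading is read column by column left to right, each column bottom to top. Quasi-Kashiwara operator $f_i$ on a word $u$: undefined if $u$ contains a subsequence $(i+1)\,i$ or no letter $i$; otherwise replaces the rightmost $i$ by $i+1$. $\Gamma(\mathsf{hypo}_n,\sigma)$ is the directed graph whose vertices are the quasi-ribbon tableaux of shape $\sigma$ with entries in $\{1,\dots,n\}$ (identified with column readings), with an edge $u\to f_i(u)$ labelled $i$, $1\le i\le n-1$, whenever defined. For a quasi-array $Q$ of size $m$ and composition $\tau$ of $m$, $\pi_\tau(Q)$ is the quasi-ribbon tableau formed by the cells of $Q$ making up a quasi-ribbon diagram of shape $\tau$ with first cell $(1,1)$; for a quasi-ribbon tableau $T$ of shape $\sigma$ with $m$ cells, $\overline{T}$ is the unique quasi-array of size $m$ with $\pi_\sigma(\overline{T})=T$.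 *)

From Stdlib Require Import ClassicalEpsilon.
From mathcomp Require Import all_boot.
Set Implicit Arguments. Unset Strict Implicit. Unset Printing Implicit Defensive.

Definition is_composition (m : nat) (s : seq nat) : Prop :=
  all (fun k => 0 < k) s /\ sumn s = m.

(* Cells (row, column), 1-based, of the quasi-ribbon diagram of shape s,
   given row by row, left to right; row i starts at column st.
   Row (i+1) starts directly below the rightmost cell of row i. *)
Fixpoint ribbon_rows (s : seq nat) (i st : nat) : seq (seq (nat * nat)) :=
  match s with
  | [::] => [::]
  | k :: s' => [seq (i, st + j) | j <- iota 0 k] :: ribbon_rows s' i.+1 (st + k - 1)
  end.

Definition ribbon_diagram (s : seq nat) := ribbon_rows s 1 1.

(* A filling is given as its list of rows; its shape is the sequence of
   row lengths. [cells T] lists ((row, col), entry). *)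
Definition shape (T : seq (seq nat)) : seq nat := map size T.

Definition cells (T : seq (seq nat)) : seq ((nat * nat) * nat) :=
  flatten [seq zip pr.1 pr.2 | pr <- zip (ribbon_diagram (shape T)) T].

Definition is_qrt (sigma : seq nat) (T : seq (seq nat)) : Prop :=
  shape T = sigma /\
  (forall x, x \in cells T -> 0 < x.2) /\
  (forall x y, x \in cells T -> y \in cells T ->
     x.1.1 = y.1.1 -> x.1.2 < y.1.2 -> x.2 <= y.2) /\
  (forall x y, x \in cells T -> y \in cells T ->
     x.1.2 = y.1.2 -> x.1.1 < y.1.1 -> x.2 < y.2).

(* Column reading: columns left to right, each column bottom to top.
   (All columns of a diagram with N cells lie in 1..N.) *)
Definition colread (T : seq (seq nat)) : seq nat :=
  flatten [seq rev [seq x.2 | x <- cells T & x.1.2 == c]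
          | c <- iota 1 (size (cells T))].

Definition qf (i : nat) (u : seq nat) : option (seq nat) :=
  if (i \notin u) || subseq [:: i.+1; i] u then None
  else Some (set_nth 0 u (size u - (index i (rev u)).+1) i.+1).

Definition vertex (n : nat) (sigma : seq nat) (T : seq (seq nat)) : Prop :=
  is_qrt sigma T /\ (forall x, x \in cells T -> x.2 <= n).

Definition edge (n : nat) (sigma : seq nat) (i : nat) (T T' : seq (seq nat)) : Prop :=
  vertex n sigma T /\ vertex n sigma T' /\ 1 <= i <= n.-1 /\
  qf i (colread T) = Some (colread T').

Definition uedge (n : nat) (sigma : seq nat) (T T' : seq (seq nat)) : Prop :=
  exists i, edge n sigma i T T'.

(* Quasi-arrays of size m, given as list of rows; row i (1-based) has
   m - i + 1 cells. qa Q (i,j) is the entry of cell (i,j). *)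
Definition qa (Q : seq (seq nat)) (p : nat * nat) : nat :=
  nth 0 (nth [::] Q p.1.-1) p.2.-1.

Definition is_quasi_array (m : nat) (Q : seq (seq nat)) : Prop :=
  size Q = m /\
  (forall i, 1 <= i <= m -> size (nth [::] Q i.-1) = m - i + 1) /\
  (forall i j, 1 <= i <= m -> 1 <= j <= m - i + 1 -> 0 < qa Q (i, j)) /\
  (forall j, 1 <= j < m -> qa Q (1, j) <= qa Q (1, j.+1)) /\
  (forall i j, 1 <= i <= m -> 1 <= j <= m - i + 1 ->
     qa Q (i, j) = qa Q (1, i + j - 1) + i - 1).

Definition pi_ (tau : seq nat) (Q : seq (seq nat)) : seq (seq nat) :=
  [seq [seq qa Q p | p <- r] | r <- ribbon_diagram tau].

(* overline T: the unique quasi-array of size m (= number of cells of T)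
   with pi_sigma(overline T) = T, where sigma is the shape of T. *)
Definition overline (T : seq (seq nat)) : seq (seq nat) :=
  epsilon (inhabits [::])
    (fun Q => is_quasi_array (sumn (shape T)) Q /\ pi_ (shape T) Q = T).

(* A quasi-ribbon tableau T of shape sigma, a composition of m, is read along its
   ribbon, which goes through the diagram one step right or down at a time.  The
   entry of the k-th cell, lying in row i, is a_k + i - 1, where a is the first
   row of the quasi-array overline T.  So T is a vertex of Gamma(hypo_n, sigma)
   exactly when a is weakly increasing with a_1 >= 1 and a_m + l <= n + 1, l the
   number of parts of sigma: sigma only enters through l, and T |-> pi_tau
   (overline T) keeps a.  An edge f_i raises the rightmost i of the column reading,
   i.e. one entry of T, by one.  Conversely, if raising the entry i of cell k
   gives a tableau again, then cell k carries the last i of the column reading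
   and no i + 1 is read before an i, so this raise is f_i.  Hence, on first rows,
   the edges are the raises a |-> a + e_k for both shapes. *)

From Stdlib Require Import ClassicalEpsilon.
From mathcomp Require Import all_boot zify.
Set Implicit Arguments. Unset Strict Implicit. Unset Printing Implicit Defensive.

Definition ribbon_cells (s : seq nat) : seq (nat * nat) := flatten (ribbon_diagram s).
Definition cell_row (s : seq nat) (k : nat) : nat := (nth (0, 0) (ribbon_cells s) k).1.
Definition cell_col (s : seq nat) (k : nat) : nat := (nth (0, 0) (ribbon_cells s) k).2.

Lemma shape_ribbon_rows s i st : shape (ribbon_rows s i st) = s.
Proof. by elim: s i st => //= k s IH i st; rewrite size_map size_iota IH. Qed.

Lemma size_ribbon_rows s i st : size (flatten (ribbon_rows s i st)) = sumn s.
Proof. by rewrite size_flatten shape_ribbon_rows. Qed.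

Lemma nth_ribbon_rows_cons k s i st x :
  nth (0, 0) (flatten (ribbon_rows (k :: s) i st)) x =
  if x < k then (i, st + x)
  else nth (0, 0) (flatten (ribbon_rows s i.+1 (st + k - 1))) (x - k).
Proof.
rewrite /= nth_cat size_map size_iota; case: ifP => // xk.
by rewrite (nth_map 0) ?size_iota // nth_iota.
Qed.

Lemma ribbon_rows_cell s i st x : all (fun k => 0 < k) s -> x < sumn s ->
  let p := nth (0, 0) (flatten (ribbon_rows s i st)) x in
  [/\ p.1 + p.2 = x + i + st, i <= p.1, st <= p.2 & p.1 < i + size s].
Proof.
elim: s i st x => [|k s IH] i st x //= /andP[k_gt0 s_pos] x_lt.
rewrite nth_ribbon_rows_cons; case: ifP => x_k /=; first by split; lia.
by have /= [] := IH i.+1 (st + k - 1) (x - k) s_pos ltac:(lia); split; lia.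
Qed.

Lemma ribbon_rows_step s i st x : all (fun k => 0 < k) s -> x.+1 < sumn s ->
  let p := nth (0, 0) (flatten (ribbon_rows s i st)) x in
  let q := nth (0, 0) (flatten (ribbon_rows s i st)) x.+1 in
  q = (p.1, p.2.+1) \/ q = (p.1.+1, p.2).
Proof.
elim: s i st x => [|k s IH] i st x //= /andP[k_gt0 s_pos] x_lt.
rewrite !nth_ribbon_rows_cons.
case: (ltnP x.+1 k) => [xk|kx]; first by rewrite ltnW //=; left; congr pair; lia.
case: (ltnP x k) => xk; last first.
  by rewrite (_ : x.+1 - k = (x - k).+1); [apply: IH => //=; lia | lia].
case: s x_lt s_pos {IH} => [|k' s] /= x_lt; first lia.
move=> /andP[k'_gt0 _]; rewrite (_ : x.+1 - k = 0) ?nth_ribbon_rows_cons ?k'_gt0; last lia.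
by right; congr pair; lia.
Qed.

Lemma ribbon_rows_last_row s i st : all (fun k => 0 < k) s -> 0 < sumn s ->
  (nth (0, 0) (flatten (ribbon_rows s i st)) (sumn s).-1).1 = i + size s - 1.
Proof.
elim: s i st => [|k s IH] i st //= /andP[k_gt0 s_pos] _.
rewrite nth_ribbon_rows_cons; case: (posnP (sumn s)) => [s_0|s_gt0].
  have -> : s = [::] by case: s s_pos s_0 {IH} => //= k' s /andP[]; lia.
  by rewrite ifT /=; lia.
rewrite ifF; last lia.
by rewrite (_ : _ - k = (sumn s).-1) ?IH //; lia.
Qed.

Section Ribbon.
Variables (m : nat) (s : seq nat).
Hypothesis s_comp : is_composition m s.

Lemma sumn_composition : sumn s = m.
Proof. by case: s_comp. Qed.

Lemma size_ribbon_cells : size (ribbon_cells s) = m.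
Proof. by rewrite size_ribbon_rows sumn_composition. Qed.

Lemma cell_bounds k : k < m ->
  [/\ cell_row s k + cell_col s k = k.+2, 0 < cell_row s k, 0 < cell_col s k
    & cell_row s k <= size s].
Proof.
case: s_comp => s_pos s_sum k_lt; rewrite -s_sum in k_lt.
have [] := ribbon_rows_cell 1 1 s_pos k_lt.
by rewrite /cell_row /cell_col /ribbon_cells /ribbon_diagram; split; lia.
Qed.

Lemma cell_step k : k.+1 < m ->
  (cell_row s k.+1 = cell_row s k /\ cell_col s k.+1 = (cell_col s k).+1) \/
  (cell_row s k.+1 = (cell_row s k).+1 /\ cell_col s k.+1 = cell_col s k).
Proof.
case: s_comp => s_pos s_sum k_lt; rewrite -s_sum in k_lt.
rewrite /cell_row /cell_col.
by case: (ribbon_rows_step 1 1 s_pos k_lt) => ->; [left | right].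
Qed.

Lemma cell_row_first : 0 < m -> cell_row s 0 = 1.
Proof. by move=> /cell_bounds []; lia. Qed.

Lemma cell_row_last : 0 < m -> cell_row s m.-1 = size s.
Proof.
case: s_comp => s_pos <- s_gt0.
by rewrite /cell_row ribbon_rows_last_row //; lia.
Qed.

Lemma cell_mono k l : k <= l -> l < m ->
  cell_row s k <= cell_row s l /\ cell_col s k <= cell_col s l.
Proof.
elim: l => [|l IH] k_l l_lt; first by have -> : k = 0 by lia.
case: (ltngtP k l.+1) => [k_lt||->] //; last lia.
by have [] := IH ltac:(lia) ltac:(lia); case: (cell_step l_lt) => [][-> ->]; lia.
Qed.

End Ribbon.

Lemma flatten_zip (S T : Type) (A : seq (seq S)) (B : seq (seq T)) :
  shape A = shape B ->
  flatten [seq zip p.1 p.2 | p <- zip A B] = zip (flatten A) (flatten B).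
Proof. by elim: A B => [|a A IH] [|b B] //= [] e /IH ->; rewrite zip_cat. Qed.

Lemma cells_nth T : cells T =
  [seq (nth (0, 0) (ribbon_cells (shape T)) k, nth 0 (flatten T) k)
  | k <- iota 0 (sumn (shape T))].
Proof.
rewrite /cells flatten_zip; last by rewrite shape_ribbon_rows.
have size_cells : size (ribbon_cells (shape T)) = sumn (shape T) by apply: size_ribbon_rows.
apply: (eq_from_nth (x0 := ((0, 0), 0))).
  by rewrite size_zip size_map size_iota size_cells size_flatten minnn.
move=> k; rewrite size_zip size_cells size_flatten minnn => k_lt.
by rewrite nth_zip ?size_cells ?size_flatten // (nth_map 0) ?size_iota ?nth_iota.
Qed.

Lemma mem_cells T x : x \in cells T <->
  exists2 k, k < sumn (shape T) &
    x = (nth (0, 0) (ribbon_cells (shape T)) k, nth 0 (flatten T) k).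
Proof.
rewrite cells_nth; split.
  by case/mapP => k; rewrite mem_iota => /andP[_ k_lt] ->; exists k.
by case=> k k_lt ->; apply/mapP; exists k; rewrite // mem_iota.
Qed.

Definition colread_index (s : seq nat) : seq nat :=
  flatten [seq rev [seq k <- iota 0 (sumn s) | cell_col s k == c] | c <- iota 1 (sumn s)].

Definition ribbon_colread (s t : seq nat) : seq nat := [seq nth 0 t k | k <- colread_index s].

Lemma colread_ribbon T : colread T = ribbon_colread (shape T) (flatten T).
Proof.
rewrite /colread cells_nth size_map size_iota /ribbon_colread /colread_index map_flatten -map_comp.
congr flatten; apply: eq_map => c /=; rewrite map_rev; congr rev.
by rewrite filter_map -!map_comp.
Qed.

(* Along the ribbon, a cell lying lower in a column comes later, so reading a
   column bottom to top means decreasing ribbon index. *)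
Definition read_before (s : seq nat) (k l : nat) : bool :=
  (cell_col s k < cell_col s l) || (cell_col s k == cell_col s l) && (l < k).

Lemma pairwise_read_before_columns s m cs : sorted ltn cs ->
  pairwise (read_before s)
    (flatten [seq rev [seq k <- iota 0 m | cell_col s k == c] | c <- cs]).
Proof.
elim: cs => [|c cs IH] // cs_sorted.
move: (cs_sorted); rewrite (sorted_pairwise ltn_trans) /= => /andP[c_lt cs_pw].
rewrite pairwise_cat IH ?andbT ?(sorted_pairwise ltn_trans) //; apply/andP; split.
  apply/allrelP => k l; rewrite mem_rev mem_filter => /andP[/eqP k_c _].
  case/flatten_mapP => c' c'_in; rewrite mem_rev mem_filter => /andP[/eqP l_c _].
  by rewrite /read_before k_c l_c (allP c_lt).
set col := [seq k <- _ | _].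
have col_sorted : sorted ltn col.
  by apply: sorted_filter; [exact: ltn_trans | exact: iota_ltn_sorted].
have : pairwise (fun k l => l < k) (rev col).
  rewrite -sorted_pairwise ?rev_sorted // => k l j lk jl; exact: ltn_trans jl lk.
apply: sub_in_pairwise (_ : all (fun k => cell_col s k == c) (rev col)).
  by move=> k l /eqP k_c /eqP l_c lk; rewrite /read_before k_c l_c eqxx lk orbT.
by rewrite all_rev; apply/allP => k; rewrite mem_filter => /andP[].
Qed.

Lemma pairwise_colread_index s : pairwise (read_before s) (colread_index s).
Proof. exact/pairwise_read_before_columns/iota_ltn_sorted. Qed.

Lemma perm_colread_index m s : is_composition m s -> perm_eq (colread_index s) (iota 0 m).
Proof.
move=> s_comp; have s_sum := sumn_composition s_comp.
apply: uniq_perm; rewrite ?iota_uniq //.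
  apply: (pairwise_uniq (r := read_before s)).
    by move=> k; rewrite /read_before ltnn eqxx ltnn.
  exact: pairwise_colread_index.
move=> k; rewrite mem_iota /=; apply/flatten_mapP/idP => [[c _]|k_lt].
  by rewrite mem_rev mem_filter mem_iota s_sum => /andP[].
exists (cell_col s k); last by rewrite mem_rev mem_filter eqxx mem_iota s_sum.
by have [? ? ? ?] := cell_bounds s_comp k_lt; rewrite mem_iota s_sum; lia.
Qed.

Definition ribbon_tableau (s : seq nat) (n : nat) (t : seq nat) : Prop :=
  [/\ size t = sumn s, (forall k, k < sumn s -> 0 < nth 0 t k <= n),
   (forall k l, k < sumn s -> l < sumn s -> cell_row s k = cell_row s l ->
      cell_col s k < cell_col s l -> nth 0 t k <= nth 0 t l) &
   (forall k l, k < sumn s -> l < sumn s -> cell_col s k = cell_col s l ->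
      cell_row s k < cell_row s l -> nth 0 t k < nth 0 t l)].

Lemma vertex_ribbon_tableau n s T :
  vertex n s T <-> shape T = s /\ ribbon_tableau s n (flatten T).
Proof.
split.
  case=> [[T_shape [T_pos [T_row T_col]]] T_bnd]; have {}T_shape : shape T = s := T_shape.
  have cellP k : k < sumn s ->
      (nth (0, 0) (ribbon_cells s) k, nth 0 (flatten T) k) \in cells T.
    by move=> k_lt; apply/mem_cells; exists k; rewrite T_shape.
  split=> //; split; first by rewrite size_flatten T_shape.
  - by move=> k /cellP k_in; rewrite (T_pos _ k_in) (T_bnd _ k_in).
  - by move=> k l /cellP k_in /cellP l_in; apply: (T_row _ _ k_in l_in).
  - by move=> k l /cellP k_in /cellP l_in; apply: (T_col _ _ k_in l_in).
case=> T_shape [_ t_bnd t_row t_col].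
have cellP x : x \in cells T -> exists2 k, k < sumn s &
    x = (nth (0, 0) (ribbon_cells s) k, nth 0 (flatten T) k).
  by rewrite -T_shape => /mem_cells.
split; first (split=> //; split; last split).
- by move=> x /cellP [k /t_bnd /andP[? _] ->].
- by move=> x y /cellP [k k_lt ->] /cellP [l l_lt ->]; apply: t_row.
- by move=> x y /cellP [k k_lt ->] /cellP [l l_lt ->]; apply: t_col.
- by move=> x /cellP [k /t_bnd /andP[_ ?] ->].
Qed.

Section RibbonTableau.
Variables (m n : nat) (s : seq nat) (t : seq nat).
Hypothesis s_comp : is_composition m s.
Hypothesis t_tab : ribbon_tableau s n t.

Lemma size_ribbon_tableau : size t = m.
Proof. by case: t_tab; rewrite (sumn_composition s_comp). Qed.

Lemma ribbon_tableau_step k : k.+1 < m ->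
  (cell_row s k.+1 = cell_row s k /\ nth 0 t k <= nth 0 t k.+1) \/
  (cell_row s k.+1 = (cell_row s k).+1 /\ nth 0 t k < nth 0 t k.+1).
Proof.
case: t_tab; rewrite (sumn_composition s_comp) => _ _ t_row t_col k_lt.
case: (cell_step s_comp k_lt) => [][row_k col_k]; [left | right]; split=> //.
- by apply: t_row; rewrite ?row_k ?col_k //; lia.
- by apply: t_col; rewrite ?row_k ?col_k //; lia.
Qed.

Lemma ribbon_tableau_mono k l : k <= l -> l < m -> nth 0 t k <= nth 0 t l.
Proof.
have t_sorted : sorted leq t.
  apply/(sortedP 0) => j; rewrite size_ribbon_tableau => j_lt.
  by case: (ribbon_tableau_step j_lt) => [][_]; lia.
move=> k_l l_lt; apply: (sorted_leq_nth leq_trans leqnn 0 t_sorted) => //;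
  rewrite inE size_ribbon_tableau; lia.
Qed.

Lemma ribbon_tableau_col k l : k < l -> l < m -> cell_col s k = cell_col s l ->
  nth 0 t k < nth 0 t l.
Proof.
case: t_tab; rewrite (sumn_composition s_comp) => _ _ _ t_col k_l l_lt col_kl.
apply: t_col => //; first lia.
have [? ? ? ?] := cell_bounds s_comp (ltn_trans k_l l_lt).
by have [] := cell_bounds s_comp l_lt; lia.
Qed.

End RibbonTableau.

(* Cell (i, j) of a quasi-array holds its first-row entry of column i + j - 1,
   plus i - 1; the ribbon cell of index k (from 0) has i + j = k + 2. *)
Definition ribbon_fill (s a : seq nat) : seq nat :=
  mkseq (fun k => nth 0 a k + cell_row s k - 1) (size a).

Definition first_row (s t : seq nat) : seq nat :=
  mkseq (fun k => nth 0 t k + 1 - cell_row s k) (size t).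

Definition admissible_row (m r n : nat) (a : seq nat) : Prop :=
  [/\ size a = m, sorted leq a, 0 < head 0 a & last 0 a + r <= n.+1].

Lemma admissible_row_nth m r n a k l : admissible_row m r n a -> k <= l -> l < m ->
  [/\ 0 < nth 0 a k, nth 0 a k <= nth 0 a l & nth 0 a l + r <= n.+1].
Proof.
case=> a_size a_sorted a_head a_last k_l l_lt.
have a_mono i j : i <= j -> j < m -> nth 0 a i <= nth 0 a j.
  by move=> i_j j_lt; apply: (sorted_leq_nth leq_trans leqnn 0 a_sorted);
    rewrite // inE a_size; lia.
rewrite -nth0 in a_head; rewrite -nth_last a_size in a_last.
have := a_mono 0 k ltac:(lia) ltac:(lia); have := a_mono l m.-1 ltac:(lia) ltac:(lia).
by have := a_mono k l k_l l_lt; split; lia.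
Qed.

Section FirstRow.
Variables (m n : nat) (s : seq nat).
Hypothesis s_comp : is_composition m s.

Lemma first_row_fill a : size a = m -> first_row s (ribbon_fill s a) = a.
Proof.
move=> a_size; apply: (eq_from_nth (x0 := 0)); rewrite !size_mkseq // => k k_lt.
rewrite !nth_mkseq ?size_mkseq //.
by rewrite a_size in k_lt; have [? ? ? ?] := cell_bounds s_comp k_lt; lia.
Qed.

Lemma ribbon_fill_incr a k : size a = m -> k < m ->
  ribbon_fill s (incr_nth a k) = incr_nth (ribbon_fill s a) k.
Proof.
move=> a_size k_lt; apply: (eq_from_nth (x0 := 0)).
  by rewrite size_mkseq !size_incr_nth size_mkseq.
move=> j; rewrite size_mkseq size_incr_nth a_size k_lt => j_lt.
rewrite nth_incr_nth !nth_mkseq ?size_incr_nth ?a_size ?k_lt // nth_incr_nth.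
by have [? ? ? ?] := cell_bounds s_comp j_lt; lia.
Qed.

Lemma ribbon_fill_tableau a :
  admissible_row m (size s) n a -> ribbon_tableau s n (ribbon_fill s a).
Proof.
move=> a_adm; have a_size : size a = m by case: a_adm.
have a_nth := admissible_row_nth a_adm.
have fillE k : k < m -> nth 0 (ribbon_fill s a) k = nth 0 a k + cell_row s k - 1.
  by move=> k_lt; rewrite nth_mkseq ?a_size.
rewrite /ribbon_tableau (sumn_composition s_comp) size_mkseq; split=> //.
- move=> k k_lt; rewrite fillE //.
  have [? ? ? ?] := cell_bounds s_comp k_lt.
  by have [] := a_nth k m.-1 ltac:(lia) ltac:(lia); lia.
- move=> k l k_lt l_lt row_kl col_kl; rewrite !fillE //.
  have [? ? ? ?] := cell_bounds s_comp k_lt; have [? ? ? ?] := cell_bounds s_comp l_lt.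
  by have [] := a_nth k l ltac:(lia) l_lt; lia.
- move=> k l k_lt l_lt col_kl row_kl; rewrite !fillE //.
  have [? ? ? ?] := cell_bounds s_comp k_lt; have [? ? ? ?] := cell_bounds s_comp l_lt.
  by have [] := a_nth k l ltac:(lia) l_lt; lia.
Qed.

Lemma ribbon_tableau_first_row t : 0 < m -> ribbon_tableau s n t ->
  admissible_row m (size s) n (first_row s t) /\ ribbon_fill s (first_row s t) = t.
Proof.
move=> m_gt0 t_tab; have t_size := size_ribbon_tableau s_comp t_tab.
have row_le k : k < m -> cell_row s k <= nth 0 t k.
  elim: k => [|k IH] k_lt.
    rewrite (cell_row_first s_comp m_gt0); case: t_tab => _ /(_ 0).
    by rewrite (sumn_composition s_comp) => /(_ m_gt0) /andP[].
  by have := IH (ltnW k_lt); case: (ribbon_tableau_step s_comp t_tab k_lt) => [][]; lia.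
have rowE k : k < m -> nth 0 (first_row s t) k = nth 0 t k + 1 - cell_row s k.
  by move=> k_lt; rewrite nth_mkseq ?t_size.
split; last first.
  apply: (eq_from_nth (x0 := 0)); rewrite !size_mkseq // => k; rewrite t_size => k_lt.
  by rewrite nth_mkseq ?size_mkseq ?t_size // rowE //; have := row_le k k_lt; lia.
split; first by rewrite size_mkseq.
- apply/(sortedP 0) => k; rewrite size_mkseq t_size => k_lt; rewrite !rowE //; last lia.
  by case: (ribbon_tableau_step s_comp t_tab k_lt) => [][->]; lia.
- by have := row_le 0 m_gt0; rewrite -nth0 rowE // (cell_row_first s_comp m_gt0); lia.
- have := row_le m.-1 ltac:(lia).
  rewrite -nth_last size_mkseq t_size rowE ?(cell_row_last s_comp m_gt0); try lia.
  by case: t_tab; rewrite (sumn_composition s_comp) => _ /(_ m.-1 ltac:(lia)) /andP[]; lia.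
Qed.

End FirstRow.

Definition tableau_of (s a : seq nat) : seq (seq nat) := reshape s (ribbon_fill s a).

Section TableauOf.
Variables (m n : nat) (s : seq nat).
Hypothesis s_comp : is_composition m s.

Lemma flatten_tableau_of a : size a = m -> flatten (tableau_of s a) = ribbon_fill s a.
Proof. by move=> a_size; rewrite reshapeKr // size_mkseq a_size (sumn_composition s_comp). Qed.

Lemma shape_tableau_of a : size a = m -> shape (tableau_of s a) = s.
Proof. by move=> a_size; rewrite reshapeKl // size_mkseq a_size (sumn_composition s_comp). Qed.

Lemma tableau_of_inj a b : size a = m -> size b = m -> tableau_of s a = tableau_of s b -> a = b.
Proof.
move=> a_size b_size /(congr1 flatten); rewrite !flatten_tableau_of //.
by move=> /(congr1 (first_row s)); rewrite !(first_row_fill s_comp).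
Qed.

Lemma vertex_tableau_of a : admissible_row m (size s) n a -> vertex n s (tableau_of s a).
Proof.
move=> a_adm; have a_size : size a = m by case: a_adm.
apply/vertex_ribbon_tableau; rewrite shape_tableau_of // flatten_tableau_of //.
by split=> //; apply: (ribbon_fill_tableau s_comp).
Qed.

Lemma vertex_eq_tableau_of T : 0 < m -> vertex n s T ->
  exists2 a, admissible_row m (size s) n a & T = tableau_of s a.
Proof.
move=> m_gt0 /vertex_ribbon_tableau [T_shape T_tab].
have [a_adm fillE] := ribbon_tableau_first_row s_comp m_gt0 T_tab.
by exists (first_row s (flatten T)); rewrite // /tableau_of fillE -T_shape flattenK.
Qed.

End TableauOf.

Definition last_index (i : nat) (u : seq nat) : nat := size u - (index i (rev u)).+1.

Lemma qfE (i : nat) (u : seq nat) : qf i u =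
  if (i \notin u) || subseq [:: i.+1; i] u then None
  else Some (set_nth 0 u (last_index i u) i.+1).
Proof. by []. Qed.

Lemma nth_last_index (i : nat) (u : seq nat) : i \in u ->
  last_index i u < size u /\ nth 0 u (last_index i u) = i.
Proof.
move=> i_in; have lt_u : index i (rev u) < size u by rewrite -size_rev index_mem mem_rev.
by rewrite /last_index -nth_rev ?nth_index ?mem_rev //; split => //; lia.
Qed.

Lemma last_indexE (i : nat) (u : seq nat) (q : nat) : q < size u -> nth 0 u q = i ->
  (forall q', q < q' < size u -> nth 0 u q' != i) -> last_index i u = q.
Proof.
move=> q_lt u_q after_q; have j_lt : size u - q.+1 < size (rev u) by rewrite size_rev; lia.
have rev_q : nth 0 (rev u) (size u - q.+1) = i.
  by rewrite nth_rev; [rewrite (_ : _ - _ = q) //; lia | lia].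
have : index i (rev u) <= size u - q.+1 by rewrite -rev_q index_nth.
rewrite leq_eqVlt => /orP[/eqP idx_q | idx_lt]; first by rewrite /last_index idx_q; lia.
have i_in : i \in rev u by rewrite -rev_q mem_nth.
have later : q < size u - (index i (rev u)).+1 < size u by lia.
have := nth_index 0 i_in; rewrite nth_rev; last by rewrite -size_rev index_mem.
by move/eqP; rewrite (negbTE (after_q _ later)).
Qed.

Lemma subseq_pair_nth (x y : nat) u : subseq [:: x; y] u ->
  exists p q, [/\ p < q, q < size u, nth 0 u p = x & nth 0 u q = y].
Proof.
elim: u => [|z u IH] //=; case: ifP => [/eqP <-|_].
  rewrite sub1seq => y_in; exists 0, (index y u).+1.
  by split=> //=; [rewrite ltnS index_mem | rewrite nth_index].
by move/IH => [p [q [pq q_lt u_p u_q]]]; exists p.+1, q.+1.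
Qed.

Lemma set_nth_succ (u : seq nat) q x : q < size u -> nth 0 u q = x ->
  set_nth 0 u q x.+1 = incr_nth u q.
Proof.
move=> q_lt <-; apply: (eq_from_nth (x0 := 0)).
  by rewrite size_set_nth size_incr_nth q_lt; lia.
by move=> j _; rewrite nth_set_nth nth_incr_nth /= eq_sym; case: eqP => [->|].
Qed.

Lemma incr_nth_map_nth (t idx : seq nat) q : uniq idx -> q < size idx ->
  incr_nth [seq nth 0 t j | j <- idx] q = [seq nth 0 (incr_nth t (nth 0 idx q)) j | j <- idx].
Proof.
move=> idx_uniq q_lt; apply: (eq_from_nth (x0 := 0)).
  by rewrite size_incr_nth !size_map q_lt.
move=> j; rewrite size_incr_nth size_map q_lt => j_lt.
by rewrite nth_incr_nth !(nth_map 0) // nth_incr_nth nth_uniq.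
Qed.

Lemma map_nth_inj (t t' idx : seq nat) : size t = size t' ->
  {subset iota 0 (size t) <= idx} ->
  [seq nth 0 t j | j <- idx] = [seq nth 0 t' j | j <- idx] -> t = t'.
Proof.
move=> size_eq idx_full map_eq; apply: (eq_from_nth (x0 := 0)) => // k k_lt.
have k_in : k \in idx by apply: idx_full; rewrite mem_iota.
have := congr1 (nth 0 ^~ (index k idx)) map_eq.
by rewrite /= !(nth_map 0) ?index_mem // nth_index.
Qed.

Section ColumnReading.
Variables (m : nat) (s : seq nat).
Hypothesis s_comp : is_composition m s.

Lemma colread_index_uniq : uniq (colread_index s).
Proof. by rewrite (perm_uniq (perm_colread_index s_comp)) iota_uniq. Qed.

Lemma mem_colread_index k : (k \in colread_index s) = (k < m).
Proof. by rewrite (perm_mem (perm_colread_index s_comp)) mem_iota. Qed.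

Lemma size_colread_index : size (colread_index s) = m.
Proof. by rewrite (perm_size (perm_colread_index s_comp)) size_iota. Qed.

Lemma nth_colread_index_lt q : q < m -> nth 0 (colread_index s) q < m.
Proof. by move=> q_lt; rewrite -mem_colread_index mem_nth ?size_colread_index. Qed.

Lemma qf_colread_incr i t1 t2 : size t1 = m -> size t2 = m ->
  qf i (ribbon_colread s t1) = Some (ribbon_colread s t2) ->
  exists2 k, k < m & t2 = incr_nth t1 k.
Proof.
move=> t1_size t2_size; rewrite qfE; case: ifP => // /norP[/negbNE i_in _] [].
have [] := nth_last_index i_in; set q := last_index _ _.
rewrite size_map size_colread_index => q_lt u_q.
rewrite (set_nth_succ _ u_q) ?size_map ?size_colread_index //.
rewrite incr_nth_map_nth ?colread_index_uniq ?size_colread_index // => /esym colread_eq.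
exists (nth 0 (colread_index s) q); first exact: nth_colread_index_lt.
apply: map_nth_inj colread_eq; first by rewrite size_incr_nth t1_size nth_colread_index_lt.
by move=> k; rewrite mem_iota t2_size mem_colread_index.
Qed.

End ColumnReading.

Section RaiseEntry.
Variables (m n : nat) (s t : seq nat) (k : nat).
Hypothesis s_comp : is_composition m s.
Hypothesis t_tab : ribbon_tableau s n t.
Hypothesis raised_tab : ribbon_tableau s n (incr_nth t k).
Hypothesis k_lt : k < m.

Let mono := ribbon_tableau_mono s_comp t_tab.
Let col := ribbon_tableau_col s_comp t_tab.
Let raised_mono := ribbon_tableau_mono s_comp raised_tab.
Let raised_col := ribbon_tableau_col s_comp raised_tab.

(* An i + 1 read before an i lies below it in the same column; raising the i at
   cell k then breaks monotonicity along the ribbon or strictness in a column. *)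
Lemma colread_raise_no_descent :
  ~~ subseq [:: (nth 0 t k).+1; nth 0 t k] (ribbon_colread s t).
Proof.
apply/negP => /subseq_pair_nth [p [q [p_q]]].
rewrite size_map (size_colread_index s_comp) => q_lt.
rewrite !(nth_map 0) ?(size_colread_index s_comp); try lia.
set e := nth 0 _ p; set d := nth 0 _ q => t_e t_d.
have e_lt : e < m by apply: (nth_colread_index_lt s_comp); lia.
have d_lt : d < m by apply: (nth_colread_index_lt s_comp).
have e_before_d : read_before s e d.
  have := pairwiseP 0 (pairwise_colread_index s) p q.
  by rewrite !inE (size_colread_index s_comp); apply; lia.
have d_e : d < e by case: (ltnP d e) => // e_d; have := mono e_d d_lt; lia.
have [_ col_de] := cell_mono s_comp (ltnW d_e) e_lt.
have {}col_de : cell_col s d = cell_col s e by move: e_before_d; rewrite /read_before; lia.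
have := nth_incr_nth t k; case: (ltngtP k d) => [k_d|d_k|k_d] raisedE.
- by have := raised_mono (ltnW k_d) d_lt; rewrite !raisedE; do 2 case: eqP; lia.
- have k_e : k < e by case: (ltnP k e) => // e_k; have := mono e_k k_lt; lia.
  have [_ col_dk] := cell_mono s_comp (ltnW d_k) k_lt.
  have [_ col_ke] := cell_mono s_comp (ltnW k_e) e_lt.
  by have := col d_k k_lt ltac:(lia); lia.
- by have := raised_col d_e e_lt col_de; rewrite !raisedE; do 2 case: eqP; lia.
Qed.

(* Another i read after cell k is either earlier along the ribbon, hence in an
   earlier column, or later along the ribbon, where raising cell k is impossible. *)
Lemma last_index_colread_raise :
  last_index (nth 0 t k) (ribbon_colread s t) = index k (colread_index s).
Proof.
have k_in : k \in colread_index s by rewrite (mem_colread_index s_comp).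
have p_lt : index k (colread_index s) < m by rewrite -(size_colread_index s_comp) index_mem.
apply: last_indexE; rewrite ?size_map ?(size_colread_index s_comp) //.
  by rewrite (nth_map 0) ?nth_index // index_mem.
move=> q /andP[p_q q_lt]; rewrite (nth_map 0) ?(size_colread_index s_comp) //.
set d := nth 0 _ q; have d_lt : d < m by apply: (nth_colread_index_lt s_comp).
have k_before_d : read_before s k d.
  have := pairwiseP 0 (pairwise_colread_index s) (index k (colread_index s)) q.
  by rewrite !inE (size_colread_index s_comp) nth_index //; apply.
have raisedE := nth_incr_nth t k; apply/eqP => t_d.
case: (ltngtP d k) => [d_k|k_d|d_k].
- have [_ col_dk] := cell_mono s_comp (ltnW d_k) k_lt.
  have col_eq : cell_col s d = cell_col s k by move: k_before_d; rewrite /read_before; lia.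
  by have := col d_k k_lt col_eq; lia.
- by have := raised_mono (ltnW k_d) d_lt; rewrite !raisedE; do 2 case: eqP; lia.
- have : index d (colread_index s) = q.
    by rewrite index_uniq ?(colread_index_uniq s_comp) ?(size_colread_index s_comp).
  by rewrite d_k; lia.
Qed.

Lemma qf_colread_raise :
  qf (nth 0 t k) (ribbon_colread s t) = Some (ribbon_colread s (incr_nth t k)).
Proof.
have k_in : k \in colread_index s by rewrite (mem_colread_index s_comp).
have p_lt : index k (colread_index s) < size (colread_index s) by rewrite index_mem.
have t_k : nth 0 (ribbon_colread s t) (index k (colread_index s)) = nth 0 t k.
  by rewrite (nth_map 0) ?nth_index.
rewrite qfE (negbTE colread_raise_no_descent) orbF -t_k mem_nth ?size_map //=.
rewrite t_k last_index_colread_raise (set_nth_succ _ t_k) ?size_map //.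
by rewrite incr_nth_map_nth ?(colread_index_uniq s_comp) ?nth_index.
Qed.

End RaiseEntry.

Section Edges.
Variables (m n : nat) (s : seq nat).
Hypothesis s_comp : is_composition m s.

Lemma colread_edge t1 t2 : ribbon_tableau s n t1 -> ribbon_tableau s n t2 ->
  (exists i, 1 <= i <= n.-1 /\ qf i (ribbon_colread s t1) = Some (ribbon_colread s t2)) <->
  exists2 k, k < m & t2 = incr_nth t1 k.
Proof.
move=> t1_tab t2_tab; have t1_size := size_ribbon_tableau s_comp t1_tab.
split=> [[i [_]]|[k k_lt t2E]].
  exact: (qf_colread_incr s_comp t1_size (size_ribbon_tableau s_comp t2_tab)).
exists (nth 0 t1 k); split; last by rewrite t2E (qf_colread_raise s_comp t1_tab) // -t2E.
have [_ t1_bnd _ _] := t1_tab; have [_ t2_bnd _ _] := t2_tab.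
rewrite (sumn_composition s_comp) in t1_bnd t2_bnd.
by have := t1_bnd k k_lt; have := t2_bnd k k_lt; rewrite t2E nth_incr_nth eqxx; lia.
Qed.

Lemma uedge_tableau_of a1 a2 :
  admissible_row m (size s) n a1 -> admissible_row m (size s) n a2 ->
  uedge n s (tableau_of s a1) (tableau_of s a2) <-> exists2 k, k < m & a2 = incr_nth a1 k.
Proof.
move=> a1_adm a2_adm; have a1_size : size a1 = m by case: a1_adm.
have a2_size : size a2 = m by case: a2_adm.
have colreadE a : size a = m -> colread (tableau_of s a) = ribbon_colread s (ribbon_fill s a).
  by move=> a_size; rewrite colread_ribbon (shape_tableau_of s_comp) ?(flatten_tableau_of s_comp).
have := colread_edge (ribbon_fill_tableau s_comp a1_adm) (ribbon_fill_tableau s_comp a2_adm).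
rewrite -!colreadE // => fill_edge.
have vertex_a1 := vertex_tableau_of s_comp a1_adm.
have vertex_a2 := vertex_tableau_of s_comp a2_adm.
split=> [[i [_ [_ edge_i]]]|[k k_lt a2E]].
  have [k k_lt fillE] := fill_edge.1 (ex_intro _ i edge_i); exists k => //.
  rewrite -(first_row_fill s_comp a2_size) fillE -(ribbon_fill_incr s_comp) //.
  by rewrite (first_row_fill s_comp) // size_incr_nth a1_size k_lt.
have fillE : ribbon_fill s a2 = incr_nth (ribbon_fill s a1) k.
  by rewrite a2E (ribbon_fill_incr s_comp).
by have [i edge_i] := fill_edge.2 (ex_intro2 _ _ k k_lt fillE); exists i.
Qed.

End Edges.

Definition quasi_array_of (m : nat) (a : seq nat) : seq (seq nat) :=
  mkseq (fun i => mkseq (fun j => nth 0 a (i + j) + i) (m - i)) m.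

Definition qa_first_row (m : nat) (Q : seq (seq nat)) : seq nat :=
  mkseq (fun k => qa Q (1, k.+1)) m.

Lemma qa_quasi_array_of m a i j : 0 < i <= m -> 0 < j <= m - i + 1 ->
  qa (quasi_array_of m a) (i, j) = nth 0 a (i + j - 2) + i - 1.
Proof.
move=> i_range j_range; rewrite /qa /= !nth_mkseq; try lia.
by rewrite (_ : i.-1 + j.-1 = i + j - 2); lia.
Qed.

Lemma qa_first_row_of m a : size a = m -> qa_first_row m (quasi_array_of m a) = a.
Proof.
move=> a_size; apply: (eq_from_nth (x0 := 0)); rewrite size_mkseq // => k k_lt.
rewrite nth_mkseq // qa_quasi_array_of; try lia.
by rewrite (_ : 1 + k.+1 - 2 = k); lia.
Qed.

Lemma quasi_array_of_quasi_array m r n a : admissible_row m r n a ->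
  is_quasi_array m (quasi_array_of m a).
Proof.
move=> a_adm; have a_size : size a = m by case: a_adm.
have a_nth := admissible_row_nth a_adm.
split; first by rewrite size_mkseq.
split; first by case=> [|i] i_range //; rewrite nth_mkseq ?size_mkseq //; lia.
split.
  move=> i j ? ?; rewrite qa_quasi_array_of //.
  by have [] := a_nth (i + j - 2) (i + j - 2); lia.
split.
  move=> j j_range; rewrite !qa_quasi_array_of; try lia.
  have -> : 1 + j.+1 - 2 = j by lia.
  by have [] := a_nth (1 + j - 2) j ltac:(lia) ltac:(lia); lia.
move=> i j ? ?; rewrite !qa_quasi_array_of; try lia.
by rewrite (_ : 1 + (i + j - 1) - 2 = i + j - 2); lia.
Qed.

Lemma pi_ribbon_cells s Q : pi_ s Q = reshape s [seq qa Q p | p <- ribbon_cells s].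
Proof.
rewrite /pi_ /ribbon_cells -map_reshape; congr map.
by rewrite -{1}(flattenK (ribbon_diagram s)) shape_ribbon_rows.
Qed.

Lemma pi_quasi_array m s Q : is_composition m s -> is_quasi_array m Q ->
  pi_ s Q = tableau_of s (qa_first_row m Q).
Proof.
move=> s_comp [_ [_ [_ [_ Q_diag]]]]; rewrite pi_ribbon_cells /tableau_of; congr reshape.
apply: (eq_from_nth (x0 := 0)); rewrite size_map ?size_mkseq (size_ribbon_cells s_comp) //.
move=> k k_lt.
rewrite (nth_map (0, 0)) ?(size_ribbon_cells s_comp) // !nth_mkseq ?size_mkseq //.
have [] := cell_bounds s_comp k_lt; rewrite /cell_row /cell_col.
case: (nth _ _ k) => i j /= ij ? ? ?; rewrite Q_diag; try lia.
by rewrite (_ : i + j - 1 = k.+1) //; lia.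
Qed.

Lemma pi_overline m n s t a : is_composition m s -> is_composition m t ->
  admissible_row m (size s) n a -> pi_ t (overline (tableau_of s a)) = tableau_of t a.
Proof.
move=> s_comp t_comp a_adm; have a_size : size a = m by case: a_adm.
set T := tableau_of s a; have T_shape : shape T = s := shape_tableau_of s_comp a_size.
have : exists Q, is_quasi_array (sumn (shape T)) Q /\ pi_ (shape T) Q = T.
  exists (quasi_array_of m a); rewrite T_shape (sumn_composition s_comp).
  have Q_qa := quasi_array_of_quasi_array a_adm.
  by rewrite (pi_quasi_array s_comp Q_qa) qa_first_row_of.
move=> /(epsilon_spec (inhabits [::])).
rewrite -/(overline T) T_shape (sumn_composition s_comp).
set Q := overline T => -[Q_qa piQ].
have first_rowQ : qa_first_row m Q = a.
  by apply: (tableau_of_inj s_comp); rewrite ?size_mkseq // -(pi_quasi_array s_comp).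
by rewrite (pi_quasi_array t_comp Q_qa) first_rowQ.
Qed.

Theorem corollary4p7 (m : nat) (sigma tau : seq nat) :
  0 < m -> is_composition m sigma -> is_composition m tau ->
  size sigma = size tau ->
  forall n : nat, 0 < n ->
  let phi := fun T => pi_ tau (overline T) in
  [/\ (forall T, vertex n sigma T -> vertex n tau (phi T)),
      (forall T1 T2, vertex n sigma T1 -> vertex n sigma T2 -> phi T1 = phi T2 -> T1 = T2),
      (forall T', vertex n tau T' -> exists2 T, vertex n sigma T & phi T = T') &
      (forall T1 T2, vertex n sigma T1 -> vertex n sigma T2 ->
         (uedge n sigma T1 T2 <-> uedge n tau (phi T1) (phi T2)))].
Proof.
move=> m_gt0 s_comp t_comp size_st n _ phi.
have phiE a : admissible_row m (size sigma) n a -> phi (tableau_of sigma a) = tableau_of tau a.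
  exact: pi_overline.
have vertexP := vertex_eq_tableau_of s_comp m_gt0.
split.
- move=> _ /vertexP [a a_adm ->]; rewrite phiE //.
  by apply: (vertex_tableau_of t_comp); rewrite -size_st.
- move=> _ _ /vertexP [a1 a1_adm ->] /vertexP [a2 a2_adm ->]; rewrite !phiE //.
  by case: a1_adm a2_adm => [? _ _ _] [? _ _ _] /(tableau_of_inj t_comp) ->.
- move=> _ /(vertex_eq_tableau_of t_comp m_gt0) [a a_adm ->]; rewrite -size_st in a_adm.
  by exists (tableau_of sigma a); [apply: (vertex_tableau_of s_comp) | rewrite phiE].
- move=> _ _ /vertexP [a1 a1_adm ->] /vertexP [a2 a2_adm ->]; rewrite !phiE //.
  by rewrite (uedge_tableau_of s_comp) // (uedge_tableau_of t_comp) -?size_st.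
Qed.
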